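(* Let $k\ge 1$ and $\ell$ be integers with $0\le \ell\le 2k-1$. Let $G=(V,E)$ be a multigraph (loops allowed) on $n$ vertices with $kn-\ell$ edges. The following statements are equivalent: (1) $G$ is $(k,0)$-sparse; (2) there is some set of $\ell$ edges which, when added to $G$, results in a $k$-map.
   Context: Graphs are multigraphs, possibly with loops. A graph is $(k,\ell)$-sparse if no subset $V'$ of $n'$ vertices spans more than $kn'-\ell$ edges (edges with both endpoints in $V'$). A map is a graph admitting an orientation of its edges such that every vertex has out-degree exactly $1$ (a loop contributes out-degree $1$ to its vertex). A $k$-map is a graph whose edge set can be partitioned into $k$ edge-disjoint maps on the same vertex set. *)

From mathcomp Require Import all_boot all_order all_algebra.
Set Implicit Arguments. Unset Strict Implicit. Unset Printing Implicit Defensive.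

(* A multigraph (loops allowed) on a finite vertex type V is given by a
   finite edge type E together with an endpoint map ends : E -> V * V.
   A loop is an edge e with (ends e).1 = (ends e).2. *)

Definition spanned (V E : finType) (ends : E -> V * V) (A : {set V}) : {set E} :=
  [set e | ((ends e).1 \in A) && ((ends e).2 \in A)].

Definition sparse (k l : nat) (V E : finType) (ends : E -> V * V) : Prop :=
  forall A : {set V},
    (#|spanned ends A|%:Z <= (k * #|A|)%:Z - l%:Z)%R.

Definition tail (V E : finType) (ends : E -> V * V) (o : E -> bool) (e : E) : V :=
  if o e then (ends e).1 else (ends e).2.

(* the subgraph with edge set S (on all of V) is a map: some orientation
   gives every vertex out-degree exactly 1 (a loop counts once) *)
Definition is_map_on (V E : finType) (ends : E -> V * V) (S : {set E}) : Prop :=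
  exists o : E -> bool,
    forall v : V, #|[set e in S | tail ends o e == v]| = 1%N.

Definition is_kmap (k : nat) (V E : finType) (ends : E -> V * V) : Prop :=
  exists c : E -> 'I_k, forall i : 'I_k, is_map_on ends [set e | c e == i].

Definition add_edges (V E : finType) (l : nat) (ends : E -> V * V)
  (add : 'I_l -> V * V) : (E + 'I_l)%type -> V * V :=
  fun x => match x with inl e => ends e | inr j => add j end.

From mathcomp Require Import all_boot all_order all_algebra.
From mathcomp Require Import zify.
Set Implicit Arguments. Unset Strict Implicit. Unset Printing Implicit Defensive.

(* Both directions go through orientations.  In a map the tail of an edge
   determines it, so a map spans at most |A| edges on A and a k-map at most
   k|A|: G is (k,0)-sparse.  Conversely, by Hakimi's theorem a (k,0)-sparse
   graph has an orientation with all out-degrees at most k; adding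
   k - outdeg(v) loops at each vertex v uses exactly k|V| - |E| = l new edges
   and makes every out-degree equal to k, and numbering the out-edges of each
   vertex by 'I_k splits the result into k maps. *)

Section Orientations.
Variables (V E : finType) (ends : E -> V * V).

Definition outdeg (o : E -> bool) (S : {set E}) (v : V) : nat :=
  #|[set e in S | tail ends o e == v]|.

Local Notation nspan A S := #|spanned ends A :&: S|.

Definition span_bounded (S : {set E}) (c : V -> nat) : Prop :=
  forall A : {set V}, nspan A S <= \sum_(v in A) c v.

Lemma sum_outdeg (o : E -> bool) (S : {set E}) :
  \sum_v outdeg o S v = #|S|.
Proof.
rewrite -sum1_card (partition_big (tail ends o) xpredT) //=.
by apply: eq_bigr => v _; rewrite sum1dep_card.
Qed.

Lemma outdeg_setD1 (o : E -> bool) (S : {set E}) (e : E) (v : V) :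
  e \in S -> outdeg o S v = (tail ends o e == v) + outdeg o (S :\ e) v.
Proof.
move=> eS; rewrite /outdeg (cardsD1 e) !inE eS /=; congr (_ + _).
by apply: eq_card => x; rewrite !inE andbA.
Qed.

Lemma nspan_setU_setI (A B : {set V}) (S : {set E}) :
  nspan A S + nspan B S <= nspan (A :|: B) S + nspan (A :&: B) S.
Proof.
rewrite -cardsUI.
have -> : (spanned ends A :&: S) :&: (spanned ends B :&: S)
          = spanned ends (A :&: B) :&: S.
  by apply/setP=> x; rewrite !inE; do ! case: (_ \in _).
rewrite leq_add2r subset_leq_card //; apply/subsetP=> x; rewrite !inE.
by do ! case: (_ \in _).
Qed.

Lemma sum_setU_setI (c : V -> nat) (A B : {set V}) :
  \sum_(v in A :|: B) c v + \sum_(v in A :&: B) c v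
  = \sum_(v in A) c v + \sum_(v in B) c v.
Proof.
rewrite !(big_mkcond (fun v => v \in _)) -!big_split /=; apply: eq_bigr => v _.
by rewrite !inE; case: (v \in A); case: (v \in B) => /=; lia.
Qed.

(* An edge e can be oriented out of one of its endpoints u without making
   a set containing u tight: two tight sets A, B blocking both endpoints
   would, by supermodularity, make A :|: B overfull once e is added back. *)
Lemma loose_endpoint (S : {set E}) (c : V -> nat) (e : E) :
  e \in S -> span_bounded S c ->
  exists b : bool, forall A : {set V},
    tail ends (fun=> b) e \in A -> nspan A (S :\ e) < \sum_(v in A) c v.
Proof.
move=> eS hS.
have [/existsP[b /forallP loose] | ] := boolP [exists b : bool,
  [forall A : {set V}, (tail ends (fun=> b) e \in A) ==>
                       (nspan A (S :\ e) < \sum_(v in A) c v)]].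
  by exists b => A uA; apply: (implyP (loose A)).
rewrite negb_exists => /forallP tight.
move: (tight true) (tight false); rewrite !negb_forall.
move=> /existsP[A]; rewrite negb_imply -leqNgt => /andP[uA tightA].
move=> /existsP[B]; rewrite negb_imply -leqNgt => /andP[wB tightB].
have e_in : spanned ends (A :|: B) :&: S
            = e |: (spanned ends (A :|: B) :&: (S :\ e)).
  apply/setP=> x; rewrite !inE; case: (eqVneq x e) => [->|] //=.
  by rewrite eS andbT; move: uA wB; rewrite /tail /= => -> ->; rewrite orbT.
have := hS (A :|: B); rewrite e_in cardsU1 !inE eqxx /= andbF.
have := nspan_setU_setI A B (S :\ e); have := sum_setU_setI c A B.
have := hS (A :&: B).
have := subset_leq_card (setIS (spanned ends (A :&: B)) (subD1set S e)).
lia.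
Qed.

Lemma span_bounded_setD1 (S : {set E}) (c : V -> nat) (e : E) (u : V) :
  span_bounded S c ->
  (forall A : {set V}, u \in A -> nspan A (S :\ e) < \sum_(v in A) c v) ->
  span_bounded (S :\ e) (fun v => c v - (v == u)).
Proof.
move=> hS loose A; have [uA | uNA] := boolP (u \in A).
  have cu : 0 < c u by have := loose [set u] (set11 u); rewrite big_set1; lia.
  have := loose A uA; rewrite !(bigD1 u uA (F := _ : V -> nat)) /= eqxx.
  rewrite [X in _ -> _ <= _ + X](eq_bigr c) => [|v /andP[_ /negbTE ->]].
    lia.
  exact: subn0.
rewrite (eq_bigr c) => [|v vA]; last first.
  by rewrite (_ : (v == u) = false) ?subn0 //; apply: contraNF uNA => /eqP <-.
exact: leq_trans (subset_leq_card (setIS _ (subD1set S e))) (hS A).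
Qed.

Theorem hakimi_orientation (S : {set E}) (c : V -> nat) :
  span_bounded S c -> exists o : E -> bool, forall v, outdeg o S v <= c v.
Proof.
have [n] := ubnP #|S|; elim: n => // n IHn in S c * => ltSn hS.
have [-> | /set0Pn[e eS]] := eqVneq S set0.
  by exists (fun=> true) => v; rewrite /outdeg setIdE set0I cards0.
have [b loose] := loose_endpoint eS hS.
set u := tail ends (fun=> b) e in loose.
have cu : 0 < c u by have := loose [set u] (set11 u); rewrite big_set1; lia.
have [|o ho] := IHn (S :\ e) _ _ (span_bounded_setD1 hS loose).
  by move: ltSn; rewrite (cardsD1 e) eS.
pose o' x := if x == e then b else o x.
have o'_off_e : outdeg o' (S :\ e) =1 outdeg o (S :\ e).
  move=> v; apply: eq_card => x; rewrite !inE /tail /o'.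
  by case: eqVneq.
exists o' => v; rewrite (outdeg_setD1 _ _ eS) o'_off_e.
have tail_e : tail ends o' e = u by rewrite /tail /o' eqxx.
have := ho v; rewrite tail_e eq_sym; case: (eqVneq v u) => [->|_]; lia.
Qed.

Lemma kmap_of_outdeg (k : nat) (o : E -> bool) :
  (forall v, outdeg o [set: E] v = k) -> is_kmap k ends.
Proof.
move=> hdeg; pose out v := enum [set x | tail ends o x == v].
have size_out v : size (out v) = k.
  by rewrite -cardE -(hdeg v); apply: eq_card => x; rewrite !inE.
have idx_lt x : index x (out (tail ends o x)) < k.
  by rewrite -(size_out (tail ends o x)) index_mem mem_enum inE.
exists (fun x => Ordinal (idx_lt x)) => i; exists o => v.
have ltik : i < size (out v) by rewrite size_out.
case: (out v) (ltik) => [|x0 _] // _.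
apply/eqP/cards1P; exists (nth x0 (out v) i); apply/setP=> x; rewrite !inE.
have mem_i := mem_nth x0 ltik; rewrite mem_enum inE in mem_i.
apply/andP/eqP => [[/eqP/(congr1 val) /= <- /eqP tx] | ->].
  by rewrite tx nth_index // -tx mem_enum inE.
split; last exact: mem_i.
by apply/eqP/val_inj; rewrite /= (eqP mem_i) index_uniq ?enum_uniq.
Qed.

Lemma card_spanned_map (S : {set E}) (A : {set V}) :
  is_map_on ends S -> nspan A S <= #|A|.
Proof.
move=> [o ho]; rewrite -(card_in_imset (f := tail ends o)).
  apply/subset_leq_card/subsetP => _ /imsetP[x + ->].
  by rewrite !inE /tail => /andP[/andP[x1 x2] _]; case: (o x).
move=> x y; rewrite !inE => /andP[_ xS] /andP[_ yS] txy.
have /eqP/cards1P[w fibre_x] := ho (tail ends o x).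
have : x \in [set e in S | tail ends o e == tail ends o x] by rewrite !inE xS eqxx.
have : y \in [set e in S | tail ends o e == tail ends o x] by rewrite !inE yS txy eqxx.
by rewrite fibre_x !inE => /eqP -> /eqP ->.
Qed.

Lemma card_spanned_kmap (k : nat) (A : {set V}) :
  is_kmap k ends -> #|spanned ends A| <= k * #|A|.
Proof.
move=> [c hc]; rewrite -sum1_card (partition_big c xpredT) //=.
apply: (@leq_trans (\sum_(i < k) #|A|)); last by rewrite sum_nat_const card_ord mulnC.
apply: leq_sum => i _; rewrite sum1dep_card.
apply: leq_trans (card_spanned_map A (hc i)).
by rewrite subset_leq_card //; apply/subsetP => e; rewrite !inE.
Qed.

End Orientations.

Lemma sparse0P (k : nat) (V E : finType) (ends : E -> V * V) :
  sparse k 0 ends <-> forall A, #|spanned ends A| <= k * #|A|.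
Proof. by split=> h A; have := h A; rewrite GRing.subr0 lez_nat. Qed.

Lemma card_spanned_add_edges (V E : finType) (l : nat) (ends : E -> V * V)
    (add : 'I_l -> V * V) (A : {set V}) :
  #|spanned ends A| <= #|spanned (add_edges ends add) A|.
Proof.
rewrite -(card_imset _ (@inl_inj E 'I_l)) subset_leq_card //.
by apply/subsetP => _ /imsetP[e eA ->]; rewrite !inE in eA *.
Qed.

Lemma exists_fun_card_fibres (V : finType) (m : V -> nat) (l : nat) :
  \sum_v m v = l -> exists f : 'I_l -> V, forall v, #|[set j | f j == v]| = m v.
Proof.
move=> sum_m; pose s := flatten [seq nseq (m v) v | v <- enum V].
have count_s v : count_mem v s = m v.
  rewrite count_flatten -map_comp sumnE big_map big_enum /=.
  rewrite (bigD1 v) //= count_nseq /pred1 /= eqxx mul1n big1 ?addn0 // => w wv.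
  by rewrite count_nseq /= (negbTE wv) mul0n.
have size_s : size s == l.
  rewrite -sum_m size_flatten /shape -map_comp sumnE big_map big_enum /=.
  by apply/eqP/eq_bigr => v _; rewrite /= size_nseq.
exists (tnth (Tuple size_s)) => v.
by rewrite -sum1dep_card -(big_tuple _ _ _ (pred1 v) (fun=> 1)) sum1_count count_s.
Qed.

Lemma add_loops_kmap (k l : nat) (V E : finType) (ends : E -> V * V) (o : E -> bool) :
  (forall v, outdeg ends o [set: E] v <= k) -> #|E| + l = k * #|V| ->
  exists add : 'I_l -> V * V, is_kmap k (add_edges ends add).
Proof.
move=> hdeg hcard; pose deficit v := k - outdeg ends o [set: E] v.
have [f fibre_f] : exists f : 'I_l -> V, forall v, #|[set j | f j == v]| = deficit v.
  apply: exists_fun_card_fibres; have := sum_outdeg ends o [set: E].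
  have : \sum_v (deficit v + outdeg ends o [set: E] v) = k * #|V|.
    rewrite (eq_bigr (fun=> k)) => [|v _]; last exact: subnK.
    by rewrite sum_nat_const mulnC.
  rewrite big_split cardsT /= => sum_split sum_out; apply/eqP.
  by rewrite -(eqn_add2r #|E|) -{1}sum_out sum_split addnC hcard.
exists (fun j => (f j, f j)).
pose o' (x : E + 'I_l) := if x is inl e then o e else true.
apply: (kmap_of_outdeg (o := o')) => v.
rewrite /outdeg setIdE setTI -sum1dep_card big_sumType /= !sum1dep_card fibre_f.
have -> : #|[set e | tail ends o e == v]| = outdeg ends o [set: E] v.
  by rewrite /outdeg setIdE setTI.
by rewrite subnKC.
Qed.

Theorem theorem2 (k l : nat) (V E : finType) (ends : E -> V * V) :
  (1 <= k)%N -> (l <= 2 * k - 1)%N ->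
  (#|E| + l = k * #|V|)%N ->
  (sparse k 0 ends <->
   exists add : 'I_l -> V * V, is_kmap k (add_edges ends add)).
Proof.
move=> _ _ hcard; rewrite sparse0P; split.
  move=> hsp; have [|o ho] := @hakimi_orientation _ _ ends [set: E] (fun=> k).
    by move=> A; rewrite setIT sum_nat_const mulnC.
  exact: add_loops_kmap ho hcard.
move=> [add hk] A.
exact: leq_trans (card_spanned_add_edges ends add A) (card_spanned_kmap A hk).
Qed.
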